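(* Let $T$ be a random variable on $\mathbb{N}$ with $q_t=\mathbb{P}(T=t)$ and suppose $\mathbb{E}[T^\delta]<\infty$ for some $\delta>0$. Fix $\tau\in(0,1)$. Then for every $r\in(0,\delta)$ there exists a constant $\widehat{C}_r>0$ such that for all sufficiently large $n$, $$\mathbb{P}(T>u_n^\uparrow(\tau))\le\widehat{C}_r\,n^{\frac{(\tau-1)(\delta-r)}{1+\delta}}.$$
   Context: $u_n^\uparrow(\tau):=\inf\{t:q_s<n^{-1+\tau}\text{ for all }s\ge t\}$. *)

From HB Require Import structures.
From mathcomp Require Import all_boot all_order all_algebra.
From mathcomp Require Import all_classical all_reals all_analysis.
Set Implicit Arguments. Unset Strict Implicit. Unset Printing Implicit Defensive.
Import Order.TTheory GRing.Theory Num.Theory.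
Local Open Scope ring_scope.

(* The law of an N-valued random variable T is given by its pmf
   q t = P(T = t). *)

Definition u_set {R : realType} (q : nat -> R) (n : nat) (tau : R) : pred nat :=
  fun t => `[< forall s : nat, (t <= s)%N -> q s < (n%:R) `^ (-1 + tau) >].

Definition u_up {R : realType} (q : nat -> R) (n : nat) (tau : R) : nat :=
  match pselect (exists t, u_set q n tau t) with
  | left h => ex_minn h
  | right _ => 0%N
  end.

Definition tail_prob {R : realType} (q : nat -> R) (u : nat) : R :=
  limn (fun m : nat => \sum_(u.+1 <= t < m) q t).

From HB Require Import structures.
From mathcomp Require Import all_boot all_order all_algebra.
From mathcomp Require Import all_classical all_reals all_analysis.
From mathcomp Require Import ring lra.
Import Order.TTheory GRing.Theory Num.Theory.
Local Open Scope classical_set_scope.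
Local Open Scope ring_scope.

(* Beyond u = u_n^up(tau) every atom q_t is below e = n^(tau-1).  Cut the tail
   at a level X: the at most floor(X)+1 atoms below X carry at most (X+1) e,
   and beyond X Markov's inequality for T^delta gives at most E[T^delta]/X^delta.
   The choice X = n^((1-tau)/(1+delta)) balances the two terms and yields
   (2 + E[T^delta]) n^(-(1-tau) delta/(1+delta)). *)

Lemma ler_sum_nat_suffix {R : numDomainType} {F : nat -> R} {lo m : nat} :
  (forall t, 0 <= F t) -> \sum_(lo <= t < m) F t <= \sum_(0 <= t < m) F t.
Proof.
move=> F0; case: (leqP lo m) => [lom|mlo].
  by rewrite [leRHS](big_cat_nat (n := lo)) //= ler_wpDl ?sumr_ge0.
by rewrite big_geq ?sumr_ge0 // ltnW.
Qed.

Lemma sum_nat_indicator_le {R : numDomainType} {e : R} (k m : nat) : 0 <= e ->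
  \sum_(0 <= t < m) (if (t < k)%N then e else 0) <= k%:R * e.
Proof.
move=> e0; have sum_const j : (j <= k)%N ->
    \sum_(0 <= t < j) (if (t < k)%N then e else 0) = j%:R * e.
  move=> jk; rewrite (eq_big_nat _ _ (F2 := fun=> e)); last first.
    by move=> t /andP[_ tj]; rewrite (leq_trans tj jk).
  by rewrite sumr_const_nat subn0 mulr_natl.
case: (leqP m k) => [mk|km].
  by rewrite sum_const // ler_wpM2r // ler_nat.
rewrite (big_cat_nat (n := k)) //=; last exact: ltnW.
rewrite sum_const // big1_seq ?addr0 //.
by move=> t; rewrite mem_index_iota /= => /andP[kt _]; rewrite ltnNge kt.
Qed.

Lemma tail_prob_le (R : realType) (q : nat -> R) (u : nat) (B : R) :
  (forall t, 0 <= q t) -> (forall m, \sum_(u.+1 <= t < m) q t <= B) ->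
  tail_prob q u <= B.
Proof.
move=> q0 qB.
have nd : nondecreasing_seq (fun m => \sum_(u.+1 <= t < m) q t).
  exact: (@nondecreasing_series _ q xpredT).
have cv : cvgn (fun m => \sum_(u.+1 <= t < m) q t).
  by apply: nondecreasing_is_cvgn => //; exists B => _ [m _ <-].
by rewrite /tail_prob; apply: limr_le => //; exact: nearW.
Qed.

Lemma le_moment_div (R : realType) (p X delta : R) (t : nat) :
  0 <= p -> 0 <= delta -> 0 < X -> X <= t%:R ->
  p <= t%:R `^ delta * p / X `^ delta.
Proof.
move=> p0 d0 X0 Xt.
rewrite ler_pdivlMr ?powR_gt0 // mulrC ler_wpM2r //.
by apply: ge0_ler_powR => //; rewrite nnegrE ?ler0n // ltW.
Qed.

Section MomentTail.
Context {R : realType} {q : nat -> R} {delta M : R}.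
Hypotheses (q0 : forall t, 0 <= q t) (delta0 : 0 < delta).
Hypothesis momentM : forall m, series (fun t => t%:R `^ delta * q t) m <= M.

Lemma partial_tail_le (e X : R) (u m : nat) :
  0 <= e -> 0 < X -> (forall s, (u < s)%N -> q s <= e) ->
  \sum_(u.+1 <= t < m) q t <= (Num.truncn X).+1%:R * e + M / X `^ delta.
Proof.
move=> e0 X0 qe; set K := (Num.truncn X).+1.
have Xd0 : 0 < X `^ delta by exact: powR_gt0.
have split_term t : (u < t < m)%N ->
    q t <= (if (t < K)%N then e else 0) + t%:R `^ delta * q t / X `^ delta.
  case/andP=> ut _; case: ifPn => [_|tK].
    apply: ler_wpDr; last exact: qe.
    by rewrite divr_ge0 ?mulr_ge0 ?powR_ge0 // ltW.
  rewrite add0r le_moment_div ?(ltW delta0) //.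
  by rewrite -leqNgt -(ler_nat R) in tK; exact: le_trans (ltW (truncnS_gt X)) tK.
apply: le_trans (ler_sum_nat split_term) _.
rewrite big_split /= -mulr_suml; apply: lerD.
  apply: le_trans (ler_sum_nat_suffix _) (sum_nat_indicator_le _ _ e0).
  by move=> t; case: ifP.
rewrite ler_wpM2r ?invr_ge0 ?powR_ge0 //.
apply: le_trans (ler_sum_nat_suffix _) (momentM m) => t.
by rewrite mulr_ge0 ?powR_ge0.
Qed.

Lemma tail_prob_moment_le {e X : R} {u : nat} :
  0 <= e -> 0 < X -> (forall s, (u < s)%N -> q s <= e) ->
  tail_prob q u <= (Num.truncn X).+1%:R * e + M / X `^ delta.
Proof. by move=> e0 X0 qe; apply: tail_prob_le => // m; exact: partial_tail_le. Qed.

End MomentTail.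

Lemma lt_u_up {R : realType} {q : nat -> R} {n : nat} (tau : R) :
  q @ \oo --> 0 -> (0 < n)%N ->
  forall s, (u_up q n tau <= s)%N -> q s < n%:R `^ (-1 + tau).
Proof.
move=> q_to0 n0.
have [t ut] : exists t, u_set q n tau t.
  have n_gt0 : 0 < n%:R :> R by rewrite ltr0n.
  have [N _ qN] := @cvgr_lt R _ _ _ q 0 q_to0 _ (powR_gt0 (-1 + tau) n_gt0).
  by exists N; apply/asboolP => s; exact: qN.
rewrite /u_up; case: pselect => [h|]; last by case; exists t.
by case: ex_minnP => m /asboolP.
Qed.

(* With X = x^a and e = x^b, the relation a + b = -(a delta) makes X e equal
   to the decay rate x^(-(a delta)) of the moment term M / X^delta. *)
Lemma balanced_tail_bound {R : realType} {x a b delta M : R} :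
  1 <= x -> 0 <= a -> 0 <= M -> a + b = - (a * delta) ->
  (Num.truncn (x `^ a)).+1%:R * x `^ b + M / (x `^ a) `^ delta
    <= (2 + M) * x `^ (- (a * delta)).
Proof.
move=> x1 a0 M0 abd; have x0 : 0 < x by exact: lt_le_trans x1.
set y := x `^ (- (a * delta)).
have Xe : x `^ a * x `^ b = y.
  by rewrite -powRD ?abd //; apply/implyP => _; rewrite gt_eqF.
have Xd : M / (x `^ a) `^ delta = M * y by rewrite /y -powRrM powRN.
have ey : x `^ b <= y by rewrite /y ler_powR // -abd lerDr.
have K1 : (Num.truncn (x `^ a)).+1%:R <= x `^ a + 1.
  by rewrite -addn1 natrD lerD2r truncn_le ltW ?powR_gt0.
apply: le_trans (_ : (x `^ a + 1) * x `^ b + M * y <= _).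
  by rewrite -Xd lerD2r ler_wpM2r ?powR_ge0.
by rewrite mulrDl Xe mul1r; lra.
Qed.

Theorem lemma7 (R : realType) (q : nat -> R) (delta tau : R)
  (hq0 : forall t, 0 <= q t)
  (hq1 : series q @ \oo --> (1 : R^o))
  (hdelta : 0 < delta)
  (hmom : cvgn (series (fun t : nat => ((t%:R) `^ delta * q t : R^o))))
  (htau0 : 0 < tau) (htau1 : tau < 1) :
  forall r : R, 0 < r -> r < delta ->
  exists C : R, 0 < C /\ exists N : nat, forall n : nat, (N <= n)%N ->
    tail_prob q (u_up q n tau)
      <= C * (n%:R) `^ ((tau - 1) * (delta - r) / (1 + delta)).
Proof.
move=> r r0 _.
set M := limn (series (fun t : nat => ((t%:R) `^ delta * q t : R^o))).
have momentM m : series (fun t => t%:R `^ delta * q t) m <= M.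
  apply: nondecreasing_cvgn_le hmom m.
  by apply: (@nondecreasing_series _ _ xpredT) => t _ _; rewrite mulr_ge0 ?powR_ge0.
have M0 : 0 <= M by apply: le_trans (momentM 0%N); rewrite /series /= big_geq.
have q_to0 : q @ \oo --> 0 by apply: cvg_series_cvg_0; apply/cvg_ex; exists 1.
set a := (1 - tau) / (1 + delta).
have d1 : 1 + delta != 0 by rewrite gt_eqF // ltr_wpDr ?ltW.
have a0 : 0 <= a by rewrite divr_ge0 ?subr_ge0 ?ltW // ltr_wpDr ?ltW.
exists (2 + M); split; first by rewrite ltr_wpDr.
exists 1%N => n n1; have n0 : (1 <= n%:R :> R) by rewrite ler1n.
have n_gt0 : 0 < n%:R :> R by rewrite ltr0n.
have small_after_u s : (u_up q n tau < s)%N -> q s <= n%:R `^ (-1 + tau).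
  by move=> us; exact/ltW/(lt_u_up tau q_to0 n1)/ltnW.
apply: le_trans (tail_prob_moment_le hq0 hdelta momentM (powR_ge0 _ _)
  (powR_gt0 a n_gt0) small_after_u) _.
apply: le_trans (balanced_tail_bound n0 a0 M0 (_ : a + (-1 + tau) = _)) _.
  by rewrite /a; field.
rewrite ler_wpM2l ?addr_ge0 // ler_powR //.
have -> : (tau - 1) * (delta - r) / (1 + delta)
    = - (a * delta) + (1 - tau) * r / (1 + delta) by rewrite /a; field.
by rewrite lerDl divr_ge0 ?mulr_ge0 ?subr_ge0 ?ltW // ltr_wpDr ?ltW.
Qed.
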